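(* Fix $\sigma^2>0$. Let $\mathcal S_C\subset\mathbb R$ be a finite constellation that is symmetric ($s\in\mathcal S_C\Rightarrow -s\in\mathcal S_C$), with points used with equal probability and unit average power. For $\delta>0$ let $\phi^{-1}_\delta(\rho)=1$ for $0\le\rho<\frac{\delta}{1+\sigma^2}$ and $\phi^{-1}_\delta(\rho)=\frac{\delta}{\rho}-\sigma^2$ for $\rho\ge\frac{\delta}{1+\sigma^2}$. Let $\psi^{opt}_{\mathcal S_C}(\rho)=\min\{\phi^{-1}_\delta(\rho),\mathrm{mmse}(\mathcal S_C,\rho)\}$ and $$a_{\mathcal S_C}(\delta)=\int_0^\infty\big(\phi^{-1}_\delta(\rho)-\psi^{opt}_{\mathcal S_C}(\rho)\big)\mathrm d\rho,\qquad R_{\mathrm{AC}}(\delta)=C_{\mathrm G}-\frac{a_{\mathcal S_C}(\delta)}{2\delta},$$ where $C_{\mathrm G}=\frac12\ln(1+1/\sigma^2)$. Then $R_{\mathrm{AC}}(\delta)\to C_{\mathrm G}$ as $\delta\to0$.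
   Context: $\mathrm{mmse}(\mathcal S,\rho)$ denotes the minimum mean-squared error of estimating $s$, drawn uniformly from $\mathcal S$, from the observation $\sqrt\rho\,s+w$ with $w\sim\mathcal N(0,1)$ independent of $s$. In the paper's interpretation $\delta\to0$ is taken jointly with the underlying code rate $R_{\mathrm C}=\delta R_{\mathrm{AC}}\to0$, and the decoder transfer curve is assumed to satisfy the matching condition $\psi=\psi^{opt}_{\mathcal S_C}$. *)

From Stdlib Require Import Reals Lra List ClassicalEpsilon.
Import ListNotations.
Open Scope R_scope.

Definition lsum (l : list R) : R := fold_right Rplus 0 l.

Definition is_integral_0_inf (f : R -> R) (l : R) : Prop :=
  (forall b, 0 <= b -> inhabited (Riemann_integrable f 0 b)) /\
  (forall eps, 0 < eps -> exists M, forall b (pr : Riemann_integrable f 0 b),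
       M <= b -> Rabs (RiemannInt pr - l) < eps).

Definition is_integral_R (f : R -> R) (l : R) : Prop :=
  (forall a b, inhabited (Riemann_integrable f a b)) /\
  (forall eps, 0 < eps -> exists M, forall a b (pr : Riemann_integrable f a b),
       a <= - M -> M <= b -> Rabs (RiemannInt pr - l) < eps).

Definition integral_0_inf (f : R -> R) : R :=
  epsilon (inhabits 0) (fun l => is_integral_0_inf f l).

Definition integral_R (f : R -> R) : R :=
  epsilon (inhabits 0) (fun l => is_integral_R f l).

Definition gauss (w : R) : R := exp (- (w ^ 2) / 2) / sqrt (2 * PI).

Definition constellation (S : list R) : Prop :=
  S <> [] /\ NoDup S /\ (forall s, In s S -> In (- s) S) /\
  lsum (map (fun s => s ^ 2) S) / INR (length S) = 1.

(* likelihood weight of point s given observation y = sqrt rho * s + w *)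
Definition lik (rho y s : R) : R := exp (- ((y - sqrt rho * s) ^ 2) / 2).

(* posterior mean E[s | y] for s uniform on S *)
Definition post_mean (S : list R) (rho y : R) : R :=
  lsum (map (fun s => s * lik rho y s) S) / lsum (map (lik rho y) S).

(* mmse(S, rho) = E[(s - E[s|y])^2], s uniform on S, w ~ N(0,1) *)
Definition mmse (S : list R) (rho : R) : R :=
  lsum (map (fun sj => integral_R (fun w =>
          (sj - post_mean S rho (sqrt rho * sj + w)) ^ 2 * gauss w)) S)
  / INR (length S).

Definition phi_inv (sigma2 delta rho : R) : R :=
  if Rlt_dec rho (delta / (1 + sigma2)) then 1 else delta / rho - sigma2.

Definition psi_opt (sigma2 : R) (S : list R) (delta rho : R) : R :=
  Rmin (phi_inv sigma2 delta rho) (mmse S rho).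

Definition a_S (sigma2 : R) (S : list R) (delta : R) : R :=
  integral_0_inf (fun rho => phi_inv sigma2 delta rho - psi_opt sigma2 S delta rho).

Definition C_G (sigma2 : R) : R := / 2 * ln (1 + / sigma2).

Definition R_AC (sigma2 : R) (S : list R) (delta : R) : R :=
  C_G sigma2 - a_S sigma2 S delta / (2 * delta).

(* Above [delta / sigma2] the integrand of [a_S] vanishes, since there
   [phi_inv <= 0 <= mmse]; below it [phi_inv <= 1]. Pairing each constellation
   point [s] with [-s] shows [|E[s | y]| <= K^2 sqrt rho |y|], so, the points
   having unit average power and the Gaussian density unit mass,
   [mmse rho >= 1 - C sqrt rho]. Hence [a_S delta <= (delta / sigma2) C sqrt (delta / sigma2)]
   and [a_S delta / (2 delta) = O(sqrt delta)]. The analytic work is to show that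
   the integrals defining [mmse] exist and that [mmse] is continuous, so that the
   integrand of [a_S] is Riemann integrable. *)

From Stdlib Require Import Reals Lra Lia List ClassicalEpsilon Permutation FunctionalExtensionality.
From Coquelicot Require Import Coquelicot.
Import ListNotations.
Open Scope R_scope.

(** * Improper integrals *)

Lemma eq_of_common_approx (L1 L2 : R) :
  (forall eps, 0 < eps -> exists x, Rabs (x - L1) < eps /\ Rabs (x - L2) < eps) ->
  L1 = L2.
Proof.
intros H; destruct (Req_dec L1 L2) as [|HL]; [easy|].
assert (He : 0 < Rabs (L1 - L2) / 2).
{ assert (Hne : L1 - L2 <> 0) by lra. pose proof (Rabs_pos_lt _ Hne); lra. }
destruct (H _ He) as [x [H1 H2]].
assert (Rabs (L1 - L2) <= Rabs (x - L1) + Rabs (x - L2)).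
{ replace (L1 - L2) with (- (x - L1) + (x - L2)) by ring.
  rewrite <- (Rabs_Ropp (x - L1)). apply Rabs_triang. }
lra.
Qed.

Lemma integral_0_inf_eventually_zero (f : R -> R) B :
  0 <= B -> (forall a b, ex_RInt f a b) -> (forall x, B <= x -> f x = 0) ->
  integral_0_inf f = RInt f 0 B.
Proof.
intros HB Hex Hz.
assert (Htail : forall b, B <= b -> RInt f 0 b = RInt f 0 B).
{ intros b Hb. rewrite <- (RInt_Chasles f 0 B b) by apply Hex.
  rewrite (RInt_ext f (fun _ => 0) B b), RInt_const.
  - change (RInt f 0 B + (b - B) * 0 = RInt f 0 B). ring.
  - intros x Hx. rewrite Rmin_left, Rmax_right in Hx by lra. apply Hz; lra. }
assert (HI : is_integral_0_inf f (RInt f 0 B)).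
{ split.
  - intros b _. constructor. apply ex_RInt_Reals_0, Hex.
  - intros eps Heps. exists B. intros b pr Hb.
    rewrite <- RInt_Reals, Htail, Rminus_eq_0, Rabs_R0 by easy. easy. }
assert (HE : is_integral_0_inf f (integral_0_inf f))
  by (unfold integral_0_inf; apply epsilon_spec; eauto).
apply eq_of_common_approx. intros eps Heps.
destruct HE as [_ HE]. destruct (HE eps Heps) as [M HM].
set (b := Rmax B M).
destruct (proj1 HI b (Rle_trans _ _ _ HB (Rmax_l B M))) as [pr].
exists (RiemannInt pr); split; [apply HM, Rmax_r|].
rewrite <- (RInt_Reals _ _ _ pr), Htail, Rminus_eq_0, Rabs_R0 by apply Rmax_l. easy.
Qed.

Definition is_RInt_line (f : R -> R) (L : R) : Prop :=
  (forall a b, ex_RInt f a b) /\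
  (forall eps, 0 < eps -> exists M, forall a b, a <= - M -> M <= b ->
     Rabs (RInt f a b - L) < eps).

Lemma integral_R_is_RInt_line (f : R -> R) L : is_RInt_line f L -> integral_R f = L.
Proof.
intros [Hex Hlim].
assert (HL : is_integral_R f L).
{ split.
  - intros a b; constructor; apply ex_RInt_Reals_0, Hex.
  - intros eps Heps; destruct (Hlim eps Heps) as [M HM]; exists M.
    intros a b pr Ha Hb; rewrite <- RInt_Reals; auto. }
assert (HE : is_integral_R f (integral_R f)) by (unfold integral_R; apply epsilon_spec; eauto).
apply eq_of_common_approx; intros eps Heps.
destruct HE as [_ HE], HL as [_ HL].
destruct (HE eps Heps) as [M1 HM1], (HL eps Heps) as [M2 HM2].
set (M := Rmax (Rabs M1) (Rabs M2)).
assert (M1 <= M /\ M2 <= M) as [HM1' HM2'].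
{ pose proof (Rle_abs M1); pose proof (Rle_abs M2).
  pose proof (Rmax_l (Rabs M1) (Rabs M2)); pose proof (Rmax_r (Rabs M1) (Rabs M2)).
  unfold M; lra. }
pose proof (ex_RInt_Reals_0 _ _ _ (Hex (- M) M)) as pr.
exists (RiemannInt pr); split; [apply HM1 | apply HM2]; lra.
Qed.

Lemma RInt_plus_scal f g c a b : ex_RInt f a b -> ex_RInt g a b ->
  RInt (fun x => f x + c * g x) a b = RInt f a b + c * RInt g a b.
Proof.
intros Hf Hg.
change (RInt (fun x => plus (f x) (scal c (g x))) a b = plus (RInt f a b) (scal c (RInt g a b))).
rewrite (RInt_plus f (fun x => scal c (g x))), (RInt_scal g); auto. apply ex_RInt_scal; auto.
Qed.

Lemma ex_RInt_plus_scal f g c a b : ex_RInt f a b -> ex_RInt g a b ->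
  ex_RInt (fun x => f x + c * g x) a b.
Proof.
intros Hf Hg.
change (ex_RInt (fun x => plus (f x) (scal c (g x))) a b).
apply ex_RInt_plus; auto. apply ex_RInt_scal; auto.
Qed.

Lemma RInt_le_RInt_wider f a b c d :
  (forall x y, ex_RInt f x y) -> (forall x, 0 <= f x) ->
  c <= a -> a <= b -> b <= d -> RInt f a b <= RInt f c d.
Proof.
intros Hex Hf Hca Hab Hbd.
assert (E1 : RInt f c a + RInt f a d = RInt f c d) by exact (RInt_Chasles f c a d (Hex _ _) (Hex _ _)).
assert (E2 : RInt f a b + RInt f b d = RInt f a d) by exact (RInt_Chasles f a b d (Hex _ _) (Hex _ _)).
assert (0 <= RInt f c a) by (apply RInt_ge_0; auto).
assert (0 <= RInt f b d) by (apply RInt_ge_0; auto).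
lra.
Qed.

Lemma RInt_le_is_RInt_line (f : R -> R) L a b :
  is_RInt_line f L -> (forall x, 0 <= f x) -> a <= b -> RInt f a b <= L.
Proof.
intros [Hex Hlim] Hpos Hab.
apply Rnot_lt_le; intro Hlt.
destruct (Hlim ((RInt f a b - L) / 2) ltac:(lra)) as [M HM].
specialize (HM (Rmin a (- M)) (Rmax b M) (Rmin_r _ _) (Rmax_r _ _)).
assert (RInt f a b <= RInt f (Rmin a (- M)) (Rmax b M))
  by (apply RInt_le_RInt_wider; auto; [apply Rmin_l | apply Rmax_l]).
apply Rabs_def2 in HM. lra.
Qed.

Lemma is_RInt_line_ge0 (f : R -> R) L : is_RInt_line f L -> (forall x, 0 <= f x) -> 0 <= L.
Proof.
intros Hf Hpos. eapply Rle_trans; [| apply (RInt_le_is_RInt_line f L 0 0); auto; lra].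
rewrite RInt_point. apply Rle_refl.
Qed.

Lemma is_RInt_line_plus_scal (f g : R -> R) Lf Lg c :
  is_RInt_line f Lf -> is_RInt_line g Lg ->
  is_RInt_line (fun x => f x + c * g x) (Lf + c * Lg).
Proof.
intros [Hfe Hfl] [Hge Hgl]; split.
- intros; apply ex_RInt_plus_scal; auto.
- intros eps Heps.
  set (e := eps / (2 * (1 + Rabs c))).
  assert (Hc0 := Rabs_pos c).
  assert (He : 0 < e) by (unfold e; apply Rdiv_lt_0_compat; lra).
  destruct (Hfl e He) as [M1 HM1], (Hgl e He) as [M2 HM2].
  exists (Rmax M1 M2). intros a b Ha Hb.
  pose proof (Rmax_l M1 M2); pose proof (Rmax_r M1 M2).
  specialize (HM1 a b ltac:(lra) ltac:(lra)).
  specialize (HM2 a b ltac:(lra) ltac:(lra)).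
  rewrite RInt_plus_scal by auto.
  replace (RInt f a b + c * RInt g a b - (Lf + c * Lg))
    with ((RInt f a b - Lf) + c * (RInt g a b - Lg)) by ring.
  eapply Rle_lt_trans; [apply Rabs_triang|]. rewrite Rabs_mult.
  assert (Rabs c * Rabs (RInt g a b - Lg) <= Rabs c * e)
    by (apply Rmult_le_compat_l; lra).
  assert (e * (2 * (1 + Rabs c)) = eps) by (unfold e; field; lra).
  nra.
Qed.

Lemma is_RInt_line_scal (f : R -> R) L c : is_RInt_line f L -> is_RInt_line (fun x => c * f x) (c * L).
Proof.
intros Hf.
assert (H0 : is_RInt_line (fun _ => 0) 0).
{ split; [intros; apply ex_RInt_const|].
  intros eps He; exists 0; intros a b _ _. rewrite RInt_const.
  change (Rabs ((b - a) * 0 - 0) < eps). rewrite Rmult_0_r, Rminus_0_r, Rabs_R0; auto. }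
assert (H := is_RInt_line_plus_scal _ _ _ _ c H0 Hf).
replace (fun x => c * f x) with (fun x => 0 + c * f x) by (apply functional_extensionality; intro; ring).
replace (c * L) with (0 + c * L) by ring. exact H.
Qed.

Lemma is_RInt_line_le (f g : R -> R) Lf Lg :
  is_RInt_line f Lf -> is_RInt_line g Lg -> (forall x, f x <= g x) -> Lf <= Lg.
Proof.
intros Hf Hg Hle.
assert (H := is_RInt_line_plus_scal g f Lg Lf (-1) Hg Hf).
apply is_RInt_line_ge0 in H; [lra|]. intro x; specialize (Hle x); lra.
Qed.

Lemma is_RInt_line_tail (f h : R -> R) Lf Lh M :
  is_RInt_line f Lf -> is_RInt_line h Lh -> (forall x, 0 <= f x <= h x) -> 0 <= M ->
  0 <= Lf - RInt f (- M) M <= Lh - RInt h (- M) M.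
Proof.
intros Hf Hh Hfh HM. split.
- assert (RInt f (- M) M <= Lf)
    by (apply RInt_le_is_RInt_line; [auto | intro x; apply Hfh | lra]).
  lra.
- assert (H := is_RInt_line_plus_scal h f Lh Lf (-1) Hh Hf).
  apply RInt_le_is_RInt_line with (a := - M) (b := M) in H;
    [| intro x; specialize (Hfh x); lra | lra].
  rewrite RInt_plus_scal in H; [lra | apply Hh | apply Hf].
Qed.

Lemma ex_is_RInt_line_bounded (f : R -> R) B :
  (forall x, continuous f x) -> (forall x, 0 <= f x) ->
  (forall M, 0 <= M -> RInt f (- M) M <= B) -> exists L, is_RInt_line f L.
Proof.
intros Hc Hpos HB.
assert (Hex : forall a b, ex_RInt f a b) by (intros; apply (ex_RInt_continuous (V := R_CompleteNormedModule)); auto).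
set (E := fun r => exists M, 0 <= M /\ r = RInt f (- M) M).
destruct (completeness E) as [L [HLub HLleast]].
- exists B; intros r [M [HM ->]]; auto.
- exists (RInt f (- 0) 0), 0; split; [lra | easy].
- exists L; split; [easy|].
  intros eps Heps.
  assert (exists M, 0 <= M /\ L - eps < RInt f (- M) M) as [M0 [HM0 Hlt]].
  { apply NNPP; intro Hno.
    assert (L <= L - eps); [|lra].
    apply HLleast. intros r [M [HM ->]].
    apply Rnot_lt_le; intro Hlt; apply Hno; exists M; auto. }
  exists M0; intros a b Ha Hb.
  set (N := Rmax (- a) b).
  assert (- a <= N /\ b <= N) as [HNa HNb] by (split; [apply Rmax_l | apply Rmax_r]).
  assert (RInt f (- M0) M0 <= RInt f a b) by (apply RInt_le_RInt_wider; auto; lra).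
  assert (RInt f a b <= RInt f (- N) N) by (apply RInt_le_RInt_wider; auto; lra).
  assert (RInt f (- N) N <= L) by (apply HLub; exists N; split; [lra | easy]).
  apply Rabs_def1; lra.
Qed.

Lemma ex_is_RInt_line_dominated (f h : R -> R) Lh :
  (forall x, continuous f x) -> (forall x, 0 <= f x <= h x) -> is_RInt_line h Lh ->
  exists L, is_RInt_line f L.
Proof.
intros Hc Hfh Hh.
apply ex_is_RInt_line_bounded with Lh; [easy | intro x; apply Hfh |].
intros M HM.
apply Rle_trans with (RInt h (- M) M).
- apply RInt_le; [lra | apply (ex_RInt_continuous (V := R_CompleteNormedModule)); auto | apply Hh | intros; apply Hfh].
- apply RInt_le_is_RInt_line; [easy | intro x; specialize (Hfh x); lra | lra].
Qed.

(** * Sums over lists *)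

Lemma Permutation_lsum l1 l2 : Permutation l1 l2 -> lsum l1 = lsum l2.
Proof. induction 1; simpl; lra. Qed.

Lemma lsum_map_plus {A} (f g : A -> R) l :
  lsum (map (fun x => f x + g x) l) = lsum (map f l) + lsum (map g l).
Proof. induction l; simpl; lra. Qed.

Lemma lsum_map_scal {A} (f : A -> R) c l :
  lsum (map (fun x => c * f x) l) = c * lsum (map f l).
Proof. induction l; simpl; [ring | rewrite IHl; ring]. Qed.

Lemma lsum_map_const {A} c (l : list A) : lsum (map (fun _ => c) l) = INR (length l) * c.
Proof. induction l; simpl length; [simpl; ring | rewrite S_INR; simpl; rewrite IHl; ring]. Qed.

Lemma lsum_map_le {A} (f g : A -> R) l :
  (forall x, In x l -> f x <= g x) -> lsum (map f l) <= lsum (map g l).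
Proof.
induction l as [|a l IH]; simpl; intros H; [lra|].
pose proof (H a (or_introl eq_refl)). pose proof (IH (fun x Hx => H x (or_intror Hx))). lra.
Qed.

Lemma Rabs_lsum_map_le {A} (f : A -> R) l :
  Rabs (lsum (map f l)) <= lsum (map (fun x => Rabs (f x)) l).
Proof.
induction l; simpl; [rewrite Rabs_R0; lra|].
eapply Rle_trans; [apply Rabs_triang | lra].
Qed.

Lemma lsum_map_ge0 {A} (f : A -> R) l : (forall x, In x l -> 0 <= f x) -> 0 <= lsum (map f l).
Proof.
induction l as [|a l IH]; simpl; intro H; [lra|].
pose proof (H a (or_introl eq_refl)). pose proof (IH (fun x Hx => H x (or_intror Hx))). lra.
Qed.

Lemma lsum_map_gt0 {A} (f : A -> R) l : l <> [] -> (forall x, 0 < f x) -> 0 < lsum (map f l).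
Proof.
intros Hl H; destruct l as [|a l]; [congruence|]. simpl.
pose proof (H a). pose proof (lsum_map_ge0 f l (fun x _ => Rlt_le _ _ (H x))). lra.
Qed.

Lemma le_lsum_map {A} (f : A -> R) l x : In x l -> (forall y, 0 <= f y) -> f x <= lsum (map f l).
Proof.
intros Hx Hf; induction l as [|a l IH]; simpl in *; [contradiction|].
destruct Hx as [<-|Hx].
- pose proof (lsum_map_ge0 f l (fun y _ => Hf y)); lra.
- pose proof (IH Hx); pose proof (Hf a); lra.
Qed.

Lemma lsum_map_Ropp_symmetric S (f : R -> R) :
  NoDup S -> (forall s, In s S -> In (- s) S) ->
  lsum (map f S) = lsum (map (fun s => f (- s)) S).
Proof.
intros Hnd Hsym.
assert (Hperm : Permutation S (map Ropp S)).
{ apply NoDup_Permutation; auto.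
  - apply FinFun.Injective_map_NoDup; auto. intros x y H; lra.
  - intro x; rewrite in_map_iff; split.
    + intro Hx. exists (- x); split; [ring | auto].
    + intros [y [<- Hy]]; auto. }
rewrite (Permutation_lsum _ _ (Permutation_map f Hperm)), map_map. easy.
Qed.

(** * The posterior mean *)

Lemma exp_le_exp x y : x <= y -> exp x <= exp y.
Proof.
intros [Hlt|<-]; [left; apply exp_increasing, Hlt | apply Rle_refl].
Qed.

Lemma exp_sub_exp_opp_le x : 0 <= x -> exp x - exp (- x) <= x * (exp x + exp (- x)).
Proof.
intro Hx.
set (h := fun x => (1 + x) * exp (- x) - (1 - x) * exp x).
assert (h 0 <= h x).
{ destruct (Req_dec x 0) as [->|Hne]; [lra|].
  destruct (MVT_gen h 0 x (fun x => x * (exp x - exp (- x)))) as [c [Hc Heq]].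
  - intros y _. unfold h. auto_derive; auto. ring.
  - intros y _. apply continuity_pt_filterlim, (ex_derive_continuous (V := R_NormedModule)).
    unfold h; auto_derive; auto.
  - rewrite Rmin_left, Rmax_right in Hc by lra.
    assert (exp (- c) <= exp c) by (apply exp_le_exp; lra).
    assert (0 <= c * (exp c - exp (- c))) by (apply Rmult_le_pos; lra).
    nra. }
unfold h in H. rewrite Ropp_0, exp_0 in H. lra.
Qed.

Lemma Rabs_exp_sub_exp_opp_le x : Rabs (exp x - exp (- x)) <= Rabs x * (exp x + exp (- x)).
Proof.
destruct (Rle_dec 0 x) as [Hx|Hx].
- assert (exp (- x) <= exp x) by (apply exp_le_exp; lra).
  rewrite !Rabs_pos_eq by lra. apply exp_sub_exp_opp_le, Hx.
- assert (exp x <= exp (- x)) by (apply exp_le_exp; lra).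
  rewrite (Rabs_left x), Rabs_left1 by lra.
  pose proof (exp_sub_exp_opp_le (- x) ltac:(lra)). rewrite Ropp_involutive in H0. lra.
Qed.

Definition lik_amp (t y s : R) : R := exp (- ((y - t * s) ^ 2) / 2).

(* [post_mean S rho y] is [post_mean_amp S (sqrt rho) y] by conversion. *)
Definition post_mean_amp (S : list R) (t y : R) : R :=
  lsum (map (fun s => s * lik_amp t y s) S) / lsum (map (lik_amp t y) S).

Lemma Rabs_odd_part_lik_amp_le K t y s : Rabs s <= K ->
  Rabs (s * (lik_amp t y s - lik_amp t y (- s))) <=
  K ^ 2 * Rabs t * Rabs y * (lik_amp t y s + lik_amp t y (- s)).
Proof.
intros Hs.
set (E := exp (- (y ^ 2 + t ^ 2 * s ^ 2) / 2)). set (x := t * s * y).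
assert (HE : 0 < E) by apply exp_pos.
assert (Hp : lik_amp t y s = E * exp x)
  by (unfold lik_amp, E, x; rewrite <- exp_plus; f_equal; field).
assert (Hm : lik_amp t y (- s) = E * exp (- x))
  by (unfold lik_amp, E, x; rewrite <- exp_plus; f_equal; field).
rewrite Hp, Hm.
replace (s * (E * exp x - E * exp (- x))) with (E * (s * (exp x - exp (- x)))) by ring.
replace (K ^ 2 * Rabs t * Rabs y * (E * exp x + E * exp (- x)))
  with (E * (K ^ 2 * Rabs t * Rabs y * (exp x + exp (- x)))) by ring.
rewrite Rabs_mult, (Rabs_pos_eq E), Rabs_mult by lra.
apply Rmult_le_compat_l; [lra|].
assert (Hsx : Rabs s * Rabs x <= K ^ 2 * Rabs t * Rabs y).
{ unfold x; rewrite !Rabs_mult.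
  pose proof (Rabs_pos s); pose proof (Rabs_pos t); pose proof (Rabs_pos y).
  assert (Rabs s * Rabs s <= K * K) by (apply Rmult_le_compat; lra).
  replace (Rabs s * (Rabs t * Rabs s * Rabs y)) with ((Rabs s * Rabs s) * (Rabs t * Rabs y)) by ring.
  replace (K ^ 2 * Rabs t * Rabs y) with ((K * K) * (Rabs t * Rabs y)) by ring.
  apply Rmult_le_compat_r; [apply Rmult_le_pos|]; lra. }
pose proof (Rabs_exp_sub_exp_opp_le x). pose proof (exp_pos x). pose proof (exp_pos (- x)).
apply Rle_trans with (Rabs s * (Rabs x * (exp x + exp (- x)))).
- apply Rmult_le_compat_l; [apply Rabs_pos | easy].
- rewrite <- Rmult_assoc. apply Rmult_le_compat_r; lra.
Qed.

Section PosteriorMean.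

Variables (S : list R) (K : R).
Hypotheses (HS : S <> []) (HK : forall s, In s S -> Rabs s <= K).

Lemma lsum_lik_amp_gt0 t y : 0 < lsum (map (lik_amp t y) S).
Proof. apply lsum_map_gt0; [easy | intro; apply exp_pos]. Qed.

Lemma Rabs_post_mean_amp_le t y : Rabs (post_mean_amp S t y) <= K.
Proof.
unfold post_mean_amp. pose proof (lsum_lik_amp_gt0 t y).
rewrite Rabs_div by lra. rewrite (Rabs_pos_eq (lsum (map (lik_amp t y) S))) by lra.
apply Rle_div_l; [easy|].
eapply Rle_trans; [apply Rabs_lsum_map_le|].
rewrite <- lsum_map_scal. apply lsum_map_le. intros s Hs.
assert (0 < lik_amp t y s) by apply exp_pos.
rewrite Rabs_mult, (Rabs_pos_eq (lik_amp t y s)) by lra.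
apply Rmult_le_compat_r; [lra | auto].
Qed.

Hypotheses (HSnd : NoDup S) (HSsym : forall s, In s S -> In (- s) S).

(* Pairing s with -s turns the numerator into a sum of sinh terms, each of
   which is at most linear in t * y. *)
Lemma Rabs_post_mean_amp_le_linear t y :
  Rabs (post_mean_amp S t y) <= K ^ 2 * Rabs t * Rabs y.
Proof.
unfold post_mean_amp. pose proof (lsum_lik_amp_gt0 t y) as HD.
set (D := lsum (map (lik_amp t y) S)) in *.
set (N := lsum (map (fun s => s * lik_amp t y s) S)).
assert (HN : N = / 2 * lsum (map (fun s => s * (lik_amp t y s - lik_amp t y (- s))) S)).
{ assert (N = lsum (map (fun s => - s * lik_amp t y (- s)) S))
    by (apply lsum_map_Ropp_symmetric; auto).
  replace (map (fun s => s * (lik_amp t y s - lik_amp t y (- s))) S)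
    with (map (fun s => s * lik_amp t y s + - s * lik_amp t y (- s)) S)
    by (apply map_ext; intro; ring).
  rewrite lsum_map_plus. fold N. lra. }
assert (HD2 : D = / 2 * lsum (map (fun s => lik_amp t y s + lik_amp t y (- s)) S)).
{ assert (D = lsum (map (fun s => lik_amp t y (- s)) S))
    by (apply lsum_map_Ropp_symmetric; auto).
  rewrite lsum_map_plus. fold D. lra. }
rewrite Rabs_div, (Rabs_pos_eq D) by lra.
apply Rle_div_l; [easy|].
rewrite HN, HD2, Rabs_mult, Rabs_pos_eq by lra.
rewrite <- !Rmult_assoc, (Rmult_comm _ (/ 2)), !Rmult_assoc.
apply Rmult_le_compat_l; [lra|].
eapply Rle_trans; [apply Rabs_lsum_map_le|].
rewrite <- !Rmult_assoc, <- lsum_map_scal. apply lsum_map_le. intros s Hs.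
apply Rabs_odd_part_lik_amp_le, HK, Hs.
Qed.

End PosteriorMean.

(** * The Gaussian integral *)

Definition egauss (x : R) : R := exp (- (x ^ 2) / 2).

Definition egauss_prim (x : R) : R := RInt egauss 0 x.

(* [egauss_prim x ^ 2 + 2 * egauss_aux x] has zero derivative and is [PI / 2]
   at [0], while [egauss_aux x <= egauss x] vanishes at infinity: this gives
   the Gaussian integral. *)
Definition egauss_param (u t : R) : R := exp (- (u ^ 2) * (1 + t ^ 2) / 2) / (1 + t ^ 2).

Definition egauss_aux (x : R) : R := RInt (egauss_param x) 0 1.

Lemma egauss_gt0 x : 0 < egauss x.
Proof. apply exp_pos. Qed.

Lemma continuous_egauss x : continuous egauss x.
Proof. apply (ex_derive_continuous (V := R_NormedModule)). unfold egauss; auto_derive; auto. Qed.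

Lemma ex_RInt_egauss a b : ex_RInt egauss a b.
Proof. apply (ex_RInt_continuous (V := R_CompleteNormedModule)); intros; apply continuous_egauss. Qed.

Lemma is_derive_egauss_prim x : is_derive egauss_prim x (egauss x).
Proof.
apply (is_derive_RInt egauss egauss_prim 0 x).
- apply filter_forall; intro b.
  apply (RInt_correct (V := R_CompleteNormedModule)), ex_RInt_egauss.
- apply continuous_egauss.
Qed.

Lemma one_add_sqr_gt0 t : 0 < 1 + t ^ 2.
Proof. pose proof (pow2_ge_0 t); lra. Qed.

Lemma is_derive_egauss_param u t :
  is_derive (fun z => egauss_param z t) u (- u * exp (- (u ^ 2) * (1 + t ^ 2) / 2)).
Proof.
unfold egauss_param. pose proof (one_add_sqr_gt0 t).
auto_derive; [lra|].
replace (u * (u * 1)) with (u ^ 2) by ring. replace (t * (t * 1)) with (t ^ 2) by ring.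
unfold Rdiv. field. lra.
Qed.

Lemma continuous_egauss_param u t : continuous (egauss_param u) t.
Proof.
apply (ex_derive_continuous (V := R_NormedModule)). unfold egauss_param; auto_derive.
pose proof (one_add_sqr_gt0 t); lra.
Qed.

Ltac continuity_2d :=
  repeat (first [ apply continuity_2d_pt_id1 | apply continuity_2d_pt_id2
                | apply continuity_2d_pt_const | apply continuity_2d_pt_mult
                | apply continuity_2d_pt_plus | apply continuity_2d_pt_minus
                | apply continuity_2d_pt_opp ]).

Lemma continuity_pt_exp x : continuity_pt exp x.
Proof. apply derivable_continuous_pt, derivable_pt_exp. Qed.

(* Differentiation under the integral sign, then the substitution [y = x * t]. *)
Lemma is_derive_egauss_aux x : is_derive egauss_aux x (- egauss x * egauss_prim x).
Proof.
assert (Hd : (fun u v => Derive (fun z => egauss_param z v) u)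
             = (fun u v => - u * exp (- (u * u) * (1 + v * v) * / 2))).
{ apply functional_extensionality; intro u; apply functional_extensionality; intro v.
  transitivity (- u * exp (- (u ^ 2) * (1 + v ^ 2) / 2)).
  - apply is_derive_unique, is_derive_egauss_param.
  - f_equal. f_equal. field. }
unfold egauss_aux.
replace (- egauss x * egauss_prim x) with (RInt (fun t => Derive (fun u => egauss_param u t) x) 0 1).
- apply is_derive_RInt_param.
  + apply filter_forall; intros y t _. eexists; apply is_derive_egauss_param.
  + intros t _. rewrite Hd. continuity_2d.
    apply continuity_1d_2d_pt_comp; [apply continuity_pt_exp|]. continuity_2d.
  + apply filter_forall; intros y. apply (ex_RInt_continuous (V := R_CompleteNormedModule)).
    intros; apply continuous_egauss_param.
- transitivity (RInt (fun t => scal (- egauss x) (scal x (egauss (x * t + 0)))) 0 1).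
  + apply RInt_ext; intros t _.
    change (Derive (fun u => egauss_param u t) x = (- egauss x) * (x * egauss (x * t + 0))).
    transitivity (- x * exp (- (x ^ 2) * (1 + t ^ 2) / 2));
      [apply is_derive_unique, is_derive_egauss_param|]. unfold egauss.
    replace (- (x ^ 2) * (1 + t ^ 2) / 2) with (- (x ^ 2) / 2 + - ((x * t + 0) ^ 2) / 2) by field.
    rewrite exp_plus. ring.
  + rewrite (RInt_scal (fun t => scal x (egauss (x * t + 0)))).
    * change (- egauss x * RInt (fun t => x * egauss (x * t + 0)) 0 1 = - egauss x * egauss_prim x).
      assert (Hlin : RInt (fun t => x * egauss (x * t + 0)) 0 1 = RInt egauss (x * 0 + 0) (x * 1 + 0))
        by apply (RInt_comp_lin egauss x 0 0 1), ex_RInt_egauss.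
      rewrite Hlin. unfold egauss_prim. f_equal. f_equal; simpl; ring.
    * apply (ex_RInt_continuous (V := R_CompleteNormedModule)). intros.
      apply (ex_derive_continuous (V := R_NormedModule)). unfold egauss. auto_derive; auto.
      apply (ex_derive_scal (fun y => y) x), ex_derive_id.
Qed.

Lemma egauss_prim_0 : egauss_prim 0 = 0.
Proof. apply (RInt_point (V := R_CompleteNormedModule)). Qed.

Lemma egauss_aux_0 : egauss_aux 0 = PI / 4.
Proof.
unfold egauss_aux.
transitivity (RInt (fun t => / (1 + t ^ 2)) 0 1).
- apply RInt_ext; intros t _. change (egauss_param 0 t = / (1 + t ^ 2)). unfold egauss_param.
  replace (- (0 ^ 2) * (1 + t ^ 2) / 2) with 0 by field. rewrite exp_0. unfold Rdiv; ring.
- apply is_RInt_unique. rewrite <- atan_1.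
  replace (atan 1) with (minus (atan 1) (atan 0)) by (rewrite atan_0; apply Rminus_0_r).
  apply (is_RInt_derive (V := R_CompleteNormedModule)).
  + intros x _. apply is_derive_Reals, derivable_pt_lim_atan.
  + intros x _. apply (ex_derive_continuous (V := R_NormedModule)).
    auto_derive. pose proof (one_add_sqr_gt0 x). simpl in *. lra.
Qed.

Lemma egauss_prim_sqr_add_aux x : egauss_prim x ^ 2 + 2 * egauss_aux x = PI / 2.
Proof.
set (F := fun x => egauss_prim x ^ 2 + 2 * egauss_aux x).
assert (HF : forall y, is_derive F y 0).
{ intro y. unfold F.
  replace 0 with (2 * egauss_prim y * egauss y + 2 * (- egauss y * egauss_prim y)) by ring.
  apply (is_derive_plus (V := R_NormedModule)).
  - replace (2 * egauss_prim y * egauss y)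
      with (INR 2 * egauss y * egauss_prim y ^ Nat.pred 2) by (simpl; ring).
    apply (is_derive_pow egauss_prim 2 y (egauss y)), is_derive_egauss_prim.
  - apply (is_derive_scal egauss_aux y 2), is_derive_egauss_aux. }
destruct (MVT_gen F 0 x (fun _ => 0)) as [c [_ Hc]].
- intros; apply HF.
- intros y _. apply continuity_pt_filterlim, (ex_derive_continuous (V := R_NormedModule)).
  eexists; apply HF.
- unfold F in *. rewrite egauss_prim_0, egauss_aux_0 in Hc. lra.
Qed.

Lemma egauss_aux_bounds x : 0 <= egauss_aux x <= egauss x.
Proof.
unfold egauss_aux.
assert (Hex : ex_RInt (egauss_param x) 0 1)
  by (apply (ex_RInt_continuous (V := R_CompleteNormedModule)); intros; apply continuous_egauss_param).
assert (Hp : forall t, 0 < egauss_param x t).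
{ intro t. pose proof (one_add_sqr_gt0 t).
  apply Rdiv_lt_0_compat; [apply exp_pos | lra]. }
split.
- apply RInt_ge_0; auto; [lra|]. intros t _. apply Rlt_le, Hp.
- replace (egauss x) with (RInt (fun _ => egauss x) 0 1)
    by (rewrite RInt_const; change ((1 - 0) * egauss x = egauss x); ring).
  apply RInt_le; auto; [lra | apply ex_RInt_const|].
  intros t _. unfold egauss_param, egauss.
  pose proof (pow2_ge_0 t). pose proof (pow2_ge_0 x).
  assert (exp (- x ^ 2 * (1 + t ^ 2) / 2) <= exp (- x ^ 2 / 2)) by (apply exp_le_exp; nra).
  pose proof (exp_pos (- x ^ 2 * (1 + t ^ 2) / 2)).
  apply Rle_trans with (exp (- x ^ 2 * (1 + t ^ 2) / 2)); [|easy].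
  apply Rle_div_l; [lra|]. nra.
Qed.

Definition egauss_half_mass : R := sqrt (PI / 2).

Lemma egauss_half_mass_gt0 : 0 < egauss_half_mass.
Proof. apply sqrt_lt_R0. pose proof PI_RGT_0; lra. Qed.

Lemma egauss_half_mass_sqr : egauss_half_mass * egauss_half_mass = PI / 2.
Proof. apply sqrt_sqrt. pose proof PI_RGT_0; lra. Qed.

Lemma egauss_prim_tail x : 1 <= x ->
  Rabs (egauss_prim x - egauss_half_mass) <= 4 / (egauss_half_mass * x).
Proof.
intro Hx.
set (c := egauss_half_mass).
pose proof (egauss_prim_sqr_add_aux x) as HC. pose proof (egauss_aux_bounds x).
pose proof egauss_half_mass_gt0. pose proof egauss_half_mass_sqr. fold c in H0, H1.
assert (HG : 0 <= egauss_prim x)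
  by (apply RInt_ge_0; [lra | apply ex_RInt_egauss | intros; apply Rlt_le, egauss_gt0]).
assert (Heg : egauss x * (1 + x ^ 2 / 2) <= 1).
{ unfold egauss. replace (- x ^ 2 / 2) with (- (x ^ 2 / 2)) by field.
  rewrite exp_Ropp. pose proof (exp_ineq1_le (x ^ 2 / 2)). pose proof (exp_pos (x ^ 2 / 2)).
  apply (Rmult_le_reg_l (exp (x ^ 2 / 2))); [easy|].
  rewrite <- Rmult_assoc, Rinv_r by lra. lra. }
assert (Hprod : Rabs (egauss_prim x - c) * (egauss_prim x + c) * x <= 4 / x).
{ rewrite <- (Rabs_pos_eq (egauss_prim x + c)) by lra. rewrite <- Rabs_mult.
  replace ((egauss_prim x - c) * (egauss_prim x + c)) with (- (2 * egauss_aux x)) by (simpl in HC; nra).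
  rewrite Rabs_Ropp, Rabs_pos_eq by lra.
  apply (Rmult_le_reg_r x); [lra|]. replace (4 / x * x) with 4 by (field; lra).
  assert (egauss_aux x * (x * x) <= egauss x * (x * x)) by (apply Rmult_le_compat_r; nra).
  pose proof (egauss_gt0 x). simpl in Heg. nra. }
apply Rle_div_r; [nra|].
assert (Rabs (egauss_prim x - c) * c <= Rabs (egauss_prim x - c) * (egauss_prim x + c))
  by (apply Rmult_le_compat_l; [apply Rabs_pos | lra]).
assert (Rabs (egauss_prim x - c) * (c * x) <= Rabs (egauss_prim x - c) * (egauss_prim x + c) * x)
  by (rewrite <- Rmult_assoc; apply Rmult_le_compat_r; lra).
assert (4 / x <= 4) by (apply Rle_div_l; lra).
lra.
Qed.

Lemma gauss_egauss w : gauss w = egauss w / (2 * egauss_half_mass).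
Proof.
unfold gauss, egauss.
replace (sqrt (2 * PI)) with (2 * egauss_half_mass); [easy|].
pose proof egauss_half_mass_gt0. pose proof egauss_half_mass_sqr.
rewrite <- (sqrt_square (2 * egauss_half_mass)) by lra. f_equal. nra.
Qed.

Lemma gauss_gt0 w : 0 < gauss w.
Proof.
rewrite gauss_egauss. pose proof egauss_half_mass_gt0.
apply Rdiv_lt_0_compat; [apply egauss_gt0 | lra].
Qed.

Lemma is_derive_gauss x : is_derive gauss x (- x * gauss x).
Proof.
unfold gauss. assert (sqrt (2 * PI) <> 0).
{ apply Rgt_not_eq, sqrt_lt_R0. pose proof PI_RGT_0; lra. }
auto_derive; [easy|]. replace (x * (x * 1)) with (x ^ 2) by ring. unfold Rdiv. field. easy.
Qed.

Lemma continuous_gauss w : continuous gauss w.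
Proof. apply (ex_derive_continuous (V := R_NormedModule)). eexists; apply is_derive_gauss. Qed.

Lemma ex_RInt_gauss a b : ex_RInt gauss a b.
Proof. apply (ex_RInt_continuous (V := R_CompleteNormedModule)); intros; apply continuous_gauss. Qed.

Lemma egauss_prim_opp x : egauss_prim (- x) = - egauss_prim x.
Proof.
unfold egauss_prim.
assert (Hlin : RInt (fun y => (-1) * egauss ((-1) * y + 0)) 0 x
               = RInt egauss ((-1) * 0 + 0) ((-1) * x + 0))
  by apply (RInt_comp_lin egauss (-1) 0 0 x), ex_RInt_egauss.
replace ((-1) * 0 + 0) with 0 in Hlin by ring. replace ((-1) * x + 0) with (- x) in Hlin by ring.
rewrite <- Hlin.
transitivity (RInt (fun y => scal (-1) (egauss y)) 0 x).
- apply RInt_ext; intros y _. change ((-1) * egauss ((-1) * y + 0) = (-1) * egauss y).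
  unfold egauss. do 4 f_equal. ring.
- rewrite (RInt_scal egauss) by apply ex_RInt_egauss.
  change ((-1) * RInt egauss 0 x = - RInt egauss 0 x). ring.
Qed.

Lemma RInt_gauss a b :
  RInt gauss a b = (egauss_prim b + egauss_prim (- a)) / (2 * egauss_half_mass).
Proof.
transitivity (RInt (fun w => scal (/ (2 * egauss_half_mass)) (egauss w)) a b).
- apply RInt_ext; intros. rewrite gauss_egauss. change (egauss x / (2 * egauss_half_mass) = / (2 * egauss_half_mass) * egauss x). unfold Rdiv; ring.
- rewrite (RInt_scal egauss) by apply ex_RInt_egauss.
  rewrite egauss_prim_opp. unfold egauss_prim.
  assert (HC : RInt egauss 0 a + RInt egauss a b = RInt egauss 0 b)
    by exact (RInt_Chasles egauss 0 a b (ex_RInt_egauss _ _) (ex_RInt_egauss _ _)).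
  change (/ (2 * egauss_half_mass) * RInt egauss a b
          = (RInt egauss 0 b + - RInt egauss 0 a) / (2 * egauss_half_mass)).
  unfold Rdiv. rewrite <- HC. ring.
Qed.

Lemma is_RInt_line_gauss : is_RInt_line gauss 1.
Proof.
split; [apply ex_RInt_gauss|].
intros eps Heps.
set (c := egauss_half_mass). pose proof egauss_half_mass_gt0 as Hc. fold c in Hc.
set (M := 1 + 4 / (c * c * eps)).
assert (HM4 : 0 < 4 / (c * c * eps)) by (apply Rdiv_lt_0_compat; [lra | apply Rmult_lt_0_compat; nra]).
assert (Htail : forall x, M <= x -> Rabs (egauss_prim x - c) <= 4 / (c * M)).
{ intros x Hx. eapply Rle_trans; [apply egauss_prim_tail; unfold M in *; lra|].
  unfold Rdiv. apply Rmult_le_compat_l; [lra|].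
  apply Rinv_le_contravar; [unfold M in *; apply Rmult_lt_0_compat; lra|].
  apply Rmult_le_compat_l; [apply Rlt_le, egauss_half_mass_gt0 | lra]. }
exists M. intros a b Ha Hb.
rewrite RInt_gauss; fold c.
replace ((egauss_prim b + egauss_prim (- a)) / (2 * c) - 1)
  with (((egauss_prim b - c) + (egauss_prim (- a) - c)) / (2 * c)) by (field; lra).
rewrite Rabs_div, (Rabs_pos_eq (2 * c)) by lra.
apply Rlt_div_l; [lra|].
eapply Rle_lt_trans; [apply Rabs_triang|].
pose proof (Htail b Hb). pose proof (Htail (- a) ltac:(lra)).
assert (4 / (c * M) < eps * c).
{ apply Rlt_div_l; [unfold M; apply Rmult_lt_0_compat; lra|].
  replace (eps * c * (c * M)) with (c * c * eps * M) by ring.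
  assert (Hce : 0 < c * c * eps) by (apply Rmult_lt_0_compat; nra).
  assert (c * c * eps * (4 / (c * c * eps)) = 4) by (field; lra).
  unfold M. nra. }
lra.
Qed.

Lemma ex_is_RInt_line_abs_mul_gauss : exists m, is_RInt_line (fun w => Rabs w * gauss w) m.
Proof.
set (f := fun w => Rabs w * gauss w).
assert (Hc : forall w, continuous f w)
  by (intro w; apply (continuous_mult Rabs gauss); [apply continuous_Rabs | apply continuous_gauss]).
assert (Hpos : forall w, 0 <= f w)
  by (intro w; apply Rmult_le_pos; [apply Rabs_pos | apply Rlt_le, gauss_gt0]).
assert (Hex : forall a b, ex_RInt f a b)
  by (intros; apply (ex_RInt_continuous (V := R_CompleteNormedModule)); auto).
apply ex_is_RInt_line_bounded with (2 * gauss 0); [easy | easy|].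
intros M HM.
assert (Hcont : forall c x, continuous (fun w => c * w * gauss w) x).
{ intros c x. apply (continuous_mult (fun w => c * w) gauss); [|apply continuous_gauss].
  apply (ex_derive_continuous (V := R_NormedModule)). auto_derive; auto. }
assert (H1 : RInt f 0 M = gauss 0 - gauss M).
{ transitivity (RInt (fun w => 1 * w * gauss w) 0 M).
  - apply RInt_ext; intros x Hx. rewrite Rmin_left, Rmax_right in Hx by lra.
    change (Rabs x * gauss x = 1 * x * gauss x). rewrite Rabs_pos_eq by lra. ring.
  - apply is_RInt_unique.
    replace (gauss 0 - gauss M) with (minus (- gauss M) (- gauss 0))
      by (change (- gauss M - - gauss 0 = gauss 0 - gauss M); ring).
    apply (is_RInt_derive (V := R_CompleteNormedModule) (fun w => - gauss w)); [|intros; apply Hcont].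
    intros x _. replace (1 * x * gauss x) with (opp (- x * gauss x)) by (change (- (- x * gauss x) = 1 * x * gauss x); ring).
    apply (is_derive_opp (V := R_NormedModule)), is_derive_gauss. }
assert (H2 : RInt f (- M) 0 = gauss 0 - gauss (- M)).
{ transitivity (RInt (fun w => -1 * w * gauss w) (- M) 0).
  - apply RInt_ext; intros x Hx. rewrite Rmin_left, Rmax_right in Hx by lra.
    change (Rabs x * gauss x = -1 * x * gauss x). rewrite Rabs_left by lra. ring.
  - apply is_RInt_unique, (is_RInt_derive (V := R_CompleteNormedModule) gauss); [|intros; apply Hcont].
    intros x _. replace (-1 * x * gauss x) with (- x * gauss x) by ring. apply is_derive_gauss. }
assert (HC : RInt f (- M) 0 + RInt f 0 M = RInt f (- M) M)
  by exact (RInt_Chasles f (- M) 0 M (Hex _ _) (Hex _ _)).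
pose proof (gauss_gt0 M). pose proof (gauss_gt0 (- M)). lra.
Qed.

(** * The mean-square error *)

Lemma continuous_eps (f : R -> R) x :
  continuous f x <->
  forall eps, 0 < eps -> exists d, 0 < d /\ forall y, Rabs (y - x) < d -> Rabs (f y - f x) < eps.
Proof.
split; [intro H; apply continuity_pt_filterlim in H; revert H | intro H; apply continuity_pt_filterlim; revert H].
- intros H eps He. destruct (H eps He) as [d [Hd Hy]]. exists d; split; [easy|].
  intros y Hyx. destruct (Req_dec y x) as [->|Hne].
  + rewrite Rminus_eq_0, Rabs_R0; easy.
  + apply (Hy y). split; [split; [exact I | auto] | exact Hyx].
- intros H eps He. destruct (H eps He) as [d [Hd Hy]]. exists d; split; [easy|].
  intros y [_ Hdy]. apply Hy, Hdy.
Qed.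

Lemma continuous_lipschitz2 (h : R -> R -> R) (f g : R -> R) x :
  (forall a b c d, Rabs (h a b - h c d) <= Rabs (a - c) + Rabs (b - d)) ->
  continuous f x -> continuous g x -> continuous (fun y => h (f y) (g y)) x.
Proof.
intros Hh Hf Hg. apply continuous_eps. intros eps He.
destruct (proj1 (continuous_eps f x) Hf (eps / 2) ltac:(lra)) as [d1 [Hd1 H1]].
destruct (proj1 (continuous_eps g x) Hg (eps / 2) ltac:(lra)) as [d2 [Hd2 H2]].
exists (Rmin d1 d2); split; [apply Rmin_pos; auto|].
intros y Hy.
pose proof (H1 y (Rlt_le_trans _ _ _ Hy (Rmin_l _ _))).
pose proof (H2 y (Rlt_le_trans _ _ _ Hy (Rmin_r _ _))).
eapply Rle_lt_trans; [apply Hh | lra].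
Qed.

Lemma Rmin_lipschitz a b c d : Rabs (Rmin a b - Rmin c d) <= Rabs (a - c) + Rabs (b - d).
Proof.
unfold Rmin; destruct (Rle_dec a b), (Rle_dec c d);
  repeat match goal with |- context [Rabs ?z] =>
    destruct (Rcase_abs z); [rewrite (Rabs_left z) by lra | rewrite (Rabs_right z) by lra] end;
  lra.
Qed.

Lemma Rmax_lipschitz a b c d : Rabs (Rmax a b - Rmax c d) <= Rabs (a - c) + Rabs (b - d).
Proof.
unfold Rmax; destruct (Rle_dec a b), (Rle_dec c d);
  repeat match goal with |- context [Rabs ?z] =>
    destruct (Rcase_abs z); [rewrite (Rabs_left z) by lra | rewrite (Rabs_right z) by lra] end;
  lra.
Qed.

Lemma continuous_lsum_map {A} (g : A -> R -> R) l x :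
  (forall s, In s l -> continuous (g s) x) ->
  continuous (fun y => lsum (map (fun s => g s y) l)) x.
Proof.
induction l as [|a l IH]; intro H; simpl.
- apply continuous_const.
- apply (continuous_plus (g a) (fun y => lsum (map (fun s => g s y) l))).
  + apply H; simpl; auto.
  + apply IH. intros; apply H; simpl; auto.
Qed.

Lemma continuity_2d_pt_pow f n x y :
  continuity_2d_pt f x y -> continuity_2d_pt (fun u v => f u v ^ n) x y.
Proof.
intro H; induction n as [|n IH]; simpl.
- apply continuity_2d_pt_const.
- apply continuity_2d_pt_mult; auto.
Qed.

Lemma continuity_2d_pt_lsum_map {A} (g : A -> R -> R -> R) l x y :
  (forall s, continuity_2d_pt (g s) x y) ->
  continuity_2d_pt (fun u v => lsum (map (fun s => g s u v) l)) x y.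
Proof.
intro H; induction l as [|a l IH]; simpl.
- apply continuity_2d_pt_const.
- apply continuity_2d_pt_plus; auto.
Qed.

Definition mse_integrand (S : list R) (s0 t w : R) : R :=
  (s0 - post_mean_amp S t (t * s0 + w)) ^ 2 * gauss w.

Definition mse_amp (S : list R) (s0 t : R) : R := integral_R (mse_integrand S s0 t).

Lemma mmse_mse_amp S rho :
  mmse S rho = lsum (map (fun s0 => mse_amp S s0 (sqrt rho)) S) / INR (length S).
Proof. reflexivity. Qed.

Lemma continuity_2d_pt_lik_amp s0 s t w :
  continuity_2d_pt (fun u v => lik_amp u (u * s0 + v) s) t w.
Proof.
unfold lik_amp. apply continuity_1d_2d_pt_comp; [apply continuity_pt_exp|].
apply (continuity_2d_pt_ext (fun u v => - ((u * s0 + v - u * s) ^ 2) * / 2));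
  [intros; unfold Rdiv; auto|].
apply continuity_2d_pt_mult; [| apply continuity_2d_pt_const].
apply continuity_2d_pt_opp, continuity_2d_pt_pow. continuity_2d.
Qed.

Section MeanSquareError.

Variables (S : list R) (K : R).
Hypotheses (HS : S <> []) (HK : forall s, In s S -> Rabs s <= K).

Lemma continuity_2d_pt_mse_integrand s0 t w : continuity_2d_pt (mse_integrand S s0) t w.
Proof.
unfold mse_integrand, post_mean_amp.
apply continuity_2d_pt_mult.
- apply continuity_2d_pt_pow, continuity_2d_pt_minus; [apply continuity_2d_pt_const|].
  apply (continuity_2d_pt_ext (fun u v =>
     lsum (map (fun s => s * lik_amp u (u * s0 + v) s) S) *
     / lsum (map (fun s => lik_amp u (u * s0 + v) s) S))); [intros; unfold Rdiv; auto|].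
  apply continuity_2d_pt_mult.
  + apply (continuity_2d_pt_lsum_map (fun s u v => s * lik_amp u (u * s0 + v) s)).
    intro s. apply continuity_2d_pt_mult; [apply continuity_2d_pt_const | apply continuity_2d_pt_lik_amp].
  + apply continuity_2d_pt_inv.
    * apply (continuity_2d_pt_lsum_map (fun s u v => lik_amp u (u * s0 + v) s)).
      intro s. apply continuity_2d_pt_lik_amp.
    * apply Rgt_not_eq, lsum_lik_amp_gt0, HS.
- apply (continuity_1d_2d_pt_comp gauss (fun u v => v)); [| apply continuity_2d_pt_id2].
  apply continuity_pt_filterlim, continuous_gauss.
Qed.

Lemma continuous_mse_integrand s0 t w : continuous (mse_integrand S s0 t) w.
Proof.
apply continuous_eps. intros eps He.
destruct (continuity_2d_pt_mse_integrand s0 t w (mkposreal eps He)) as [d Hd].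
exists d; split; [apply cond_pos|]. intros y Hy. apply Hd; [| easy].
rewrite Rminus_eq_0, Rabs_R0. apply cond_pos.
Qed.

Lemma mse_integrand_bounds s0 t w : Rabs s0 <= K ->
  0 <= mse_integrand S s0 t w <= 4 * K ^ 2 * gauss w.
Proof.
intros Hs0. unfold mse_integrand.
pose proof (Rabs_post_mean_amp_le S K HS HK t (t * s0 + w)). pose proof (gauss_gt0 w).
set (p := post_mean_amp S t (t * s0 + w)) in *.
split; [apply Rmult_le_pos; [apply pow2_ge_0 | lra]|].
apply Rmult_le_compat_r; [lra|].
assert (Rabs (s0 - p) <= 2 * K).
{ unfold Rminus. eapply Rle_trans; [apply Rabs_triang | rewrite Rabs_Ropp; lra]. }
rewrite <- (pow2_abs (s0 - p)). pose proof (Rabs_pos (s0 - p)). simpl. nra.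
Qed.

Lemma is_RInt_line_mse_amp s0 t : Rabs s0 <= K ->
  is_RInt_line (mse_integrand S s0 t) (mse_amp S s0 t).
Proof.
intros Hs0.
destruct (ex_is_RInt_line_dominated (mse_integrand S s0 t)
            (fun w => 4 * K ^ 2 * gauss w) (4 * K ^ 2 * 1)) as [L HL].
- apply continuous_mse_integrand.
- intro; apply mse_integrand_bounds, Hs0.
- apply is_RInt_line_scal, is_RInt_line_gauss.
- unfold mse_amp. rewrite (integral_R_is_RInt_line _ L HL). exact HL.
Qed.

Lemma mse_amp_truncation s0 eps : Rabs s0 <= K -> 0 < eps ->
  exists M, 0 <= M /\
    forall t, Rabs (mse_amp S s0 t - RInt (mse_integrand S s0 t) (- M) M) < eps.
Proof.
intros Hs0 He.
set (C := 4 * K ^ 2).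
assert (HC : 0 <= C) by (unfold C; pose proof (pow2_ge_0 K); lra).
destruct (proj2 is_RInt_line_gauss (eps / (C + 1))) as [M0 HM0];
  [apply Rdiv_lt_0_compat; lra|].
exists (Rabs M0); split; [apply Rabs_pos|]. intro t.
specialize (HM0 (- Rabs M0) (Rabs M0) ltac:(pose proof (Rle_abs M0); lra) (Rle_abs M0)).
apply Rabs_def2 in HM0.
destruct (is_RInt_line_tail (mse_integrand S s0 t) (fun w => C * gauss w)
            (mse_amp S s0 t) (C * 1) (Rabs M0)) as [T1 T2].
- apply is_RInt_line_mse_amp, Hs0.
- apply is_RInt_line_scal, is_RInt_line_gauss.
- intro; apply mse_integrand_bounds, Hs0.
- apply Rabs_pos.
- assert (Hs : RInt (fun w => C * gauss w) (- Rabs M0) (Rabs M0) = C * RInt gauss (- Rabs M0) (Rabs M0))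
    by exact (RInt_scal gauss (- Rabs M0) (Rabs M0) C (ex_RInt_gauss _ _)).
  rewrite Hs in T2. rewrite Rabs_pos_eq by lra.
  assert (C * (1 - RInt gauss (- Rabs M0) (Rabs M0)) <= C * (eps / (C + 1)))
    by (apply Rmult_le_compat_l; lra).
  assert (C * (eps / (C + 1)) = eps - eps / (C + 1)) by (field; lra).
  assert (0 < eps / (C + 1)) by (apply Rdiv_lt_0_compat; lra).
  lra.
Qed.

Lemma continuous_mse_amp s0 t0 : Rabs s0 <= K -> continuous (mse_amp S s0) t0.
Proof.
intros Hs0. apply continuous_eps. intros eps He.
destruct (mse_amp_truncation s0 (eps / 3) Hs0 ltac:(lra)) as [M [HM Htr]].
set (eta := eps / (3 * (2 * M + 1))).
assert (Heta : 0 < eta) by (unfold eta; apply Rdiv_lt_0_compat; lra).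
destruct (uniform_continuity_2d (mse_integrand S s0) (t0 - 1) (t0 + 1) (- M) M
  (fun x y _ _ => continuity_2d_pt_mse_integrand s0 x y) (mkposreal eta Heta)) as [d Hd].
exists (Rmin 1 d). split; [apply Rmin_pos; [lra | apply cond_pos]|].
intros t Ht.
assert (Ht1 : Rabs (t - t0) < 1) by (eapply Rlt_le_trans; [exact Ht | apply Rmin_l]).
assert (Htd : Rabs (t - t0) < d) by (eapply Rlt_le_trans; [exact Ht | apply Rmin_r]).
apply Rabs_def2 in Ht1.
assert (Hex : forall t, ex_RInt (mse_integrand S s0 t) (- M) M).
{ intro. apply (ex_RInt_continuous (V := R_CompleteNormedModule)).
  intros; apply continuous_mse_integrand. }
assert (Hdiff : Rabs (RInt (mse_integrand S s0 t) (- M) M - RInt (mse_integrand S s0 t0) (- M) M)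
                <= (M - - M) * eta).
{ replace (RInt (mse_integrand S s0 t) (- M) M - RInt (mse_integrand S s0 t0) (- M) M)
    with (RInt (mse_integrand S s0 t) (- M) M + -1 * RInt (mse_integrand S s0 t0) (- M) M) by ring.
  rewrite <- RInt_plus_scal by apply Hex.
  apply (abs_RInt_le_const (fun w => mse_integrand S s0 t w + -1 * mse_integrand S s0 t0 w));
    [lra | apply ex_RInt_plus_scal; apply Hex|].
  intros w Hw. apply Rlt_le.
  replace (mse_integrand S s0 t w + -1 * mse_integrand S s0 t0 w)
    with (mse_integrand S s0 t w - mse_integrand S s0 t0 w) by ring.
  apply (Hd t0 w t w); [lra | lra | lra | lra | easy |]. rewrite Rminus_eq_0, Rabs_R0. apply cond_pos. }
assert ((M - - M) * eta < eps / 3).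
{ unfold eta. replace ((M - - M) * (eps / (3 * (2 * M + 1)))) with (eps / 3 * (2 * M / (2 * M + 1)))
    by (field; lra).
  rewrite <- (Rmult_1_r (eps / 3)) at 2. apply Rmult_lt_compat_l; [lra|].
  apply Rlt_div_l; lra. }
pose proof (Htr t). pose proof (Htr t0).
replace (mse_amp S s0 t - mse_amp S s0 t0)
  with ((mse_amp S s0 t - RInt (mse_integrand S s0 t) (- M) M)
        + (RInt (mse_integrand S s0 t) (- M) M - RInt (mse_integrand S s0 t0) (- M) M)
        - (mse_amp S s0 t0 - RInt (mse_integrand S s0 t0) (- M) M)) by ring.
unfold Rminus at 1. eapply Rle_lt_trans; [apply Rabs_triang|].
rewrite Rabs_Ropp. eapply Rle_lt_trans; [apply Rplus_le_compat_r, Rabs_triang|]. lra.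
Qed.

Hypotheses (HSnd : NoDup S) (HSsym : forall s, In s S -> In (- s) S).

Lemma mse_integrand_ge s0 t w : Rabs s0 <= K -> 0 <= t ->
  (s0 ^ 2 - 2 * K ^ 3 * t * (t * K + Rabs w)) * gauss w <= mse_integrand S s0 t w.
Proof.
intros Hs0 Ht. unfold mse_integrand.
apply Rmult_le_compat_r; [apply Rlt_le, gauss_gt0|].
pose proof (Rabs_post_mean_amp_le_linear S K HS HK HSnd HSsym t (t * s0 + w)) as Hp.
set (p := post_mean_amp S t (t * s0 + w)) in *.
assert (HK0 : 0 <= K) by (pose proof (Rabs_pos s0); lra).
assert (Hy : Rabs (t * s0 + w) <= t * K + Rabs w).
{ eapply Rle_trans; [apply Rabs_triang|]. rewrite Rabs_mult, (Rabs_pos_eq t) by lra.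
  pose proof (Rmult_le_compat_l t _ _ Ht Hs0). lra. }
assert (Hp' : Rabs p <= K ^ 2 * (t * (t * K + Rabs w))).
{ rewrite (Rabs_pos_eq t) in Hp by lra. rewrite <- Rmult_assoc.
  eapply Rle_trans; [exact Hp|].
  apply Rmult_le_compat_l; [apply Rmult_le_pos; [apply pow2_ge_0 | easy] | easy]. }
assert (Rabs (s0 * p) <= K * (K ^ 2 * (t * (t * K + Rabs w))))
  by (rewrite Rabs_mult; apply Rmult_le_compat; auto; apply Rabs_pos).
pose proof (Rle_abs (s0 * p)). pose proof (pow2_ge_0 p).
replace ((s0 - p) ^ 2) with (s0 ^ 2 - 2 * (s0 * p) + p ^ 2) by ring.
replace (2 * K ^ 3 * t * (t * K + Rabs w)) with (2 * (K * (K ^ 2 * (t * (t * K + Rabs w))))) by ring.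
lra.
Qed.

Lemma mse_amp_ge s0 t m1 : Rabs s0 <= K -> 0 <= t ->
  is_RInt_line (fun w => Rabs w * gauss w) m1 ->
  s0 ^ 2 - 2 * K ^ 3 * t * (t * K + m1) <= mse_amp S s0 t.
Proof.
intros Hs0 Ht Hm1.
assert (Hlow := is_RInt_line_plus_scal _ _ _ _ (- 2 * K ^ 3 * t)
  (is_RInt_line_scal _ _ (s0 ^ 2) is_RInt_line_gauss)
  (is_RInt_line_plus_scal _ _ _ _ 1 (is_RInt_line_scal _ _ (t * K) is_RInt_line_gauss) Hm1)).
replace (s0 ^ 2 - 2 * K ^ 3 * t * (t * K + m1))
  with (s0 ^ 2 * 1 + - 2 * K ^ 3 * t * (t * K * 1 + 1 * m1)) by ring.
apply (is_RInt_line_le _ _ _ _ Hlow (is_RInt_line_mse_amp s0 t Hs0)).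
intro w. eapply Rle_trans; [| apply mse_integrand_ge; easy]. right; ring.
Qed.

End MeanSquareError.

Lemma exists_abs_bound (S : list R) : exists K, 0 <= K /\ forall s, In s S -> Rabs s <= K.
Proof.
exists (lsum (map Rabs S)); split; [apply lsum_map_ge0; intros; apply Rabs_pos|].
intros s Hs. apply le_lsum_map; [easy | apply Rabs_pos].
Qed.

Section Constellation.

Variable S : list R.
Hypothesis HS : constellation S.

Lemma mmse_ge0 rho : 0 <= mmse S rho.
Proof.
destruct HS as [Hne _]. destruct (exists_abs_bound S) as [K [_ HK]].
rewrite mmse_mse_amp. apply Rdiv_le_0_compat.
- apply lsum_map_ge0. intros s0 Hs0.
  apply (is_RInt_line_ge0 (mse_integrand S s0 (sqrt rho))).
  + apply is_RInt_line_mse_amp with K; auto.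
  + intro w. apply (mse_integrand_bounds S K Hne HK), HK, Hs0.
- apply lt_0_INR. destruct S; [congruence | simpl; lia].
Qed.

Lemma continuous_mmse rho : continuous (mmse S) rho.
Proof.
destruct HS as [Hne _]. destruct (exists_abs_bound S) as [K [_ HK]].
apply (continuous_ext (fun rho => lsum (map (fun s0 => mse_amp S s0 (sqrt rho)) S) * / INR (length S)));
  [intro; rewrite mmse_mse_amp; reflexivity|].
apply (continuous_mult (fun rho => lsum (map (fun s0 => mse_amp S s0 (sqrt rho)) S))
                       (fun _ => / INR (length S))); [|apply continuous_const].
apply (continuous_lsum_map (fun s0 rho => mse_amp S s0 (sqrt rho))). intros s0 Hs0.
apply (continuous_comp sqrt (mse_amp S s0)); [apply continuous_sqrt|].
apply continuous_mse_amp with K; auto.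
Qed.

Lemma mmse_ge_one_sub_sqrt :
  exists C, 0 <= C /\ forall rho, 0 <= rho <= 1 -> 1 - C * sqrt rho <= mmse S rho.
Proof.
destruct HS as [Hne [Hnd [Hsym Hpow]]]. destruct (exists_abs_bound S) as [K [HK0 HK]].
destruct ex_is_RInt_line_abs_mul_gauss as [m1 Hm1].
assert (Hm10 : 0 <= m1)
  by (apply (is_RInt_line_ge0 _ _ Hm1); intro; apply Rmult_le_pos; [apply Rabs_pos | apply Rlt_le, gauss_gt0]).
exists (2 * K ^ 3 * (K + m1)); split; [pose proof (pow_le K 3 HK0); nra|].
intros rho Hrho.
set (t := sqrt rho). set (n := INR (length S)) in Hpow.
assert (Ht : 0 <= t <= 1) by (split; [apply sqrt_pos | rewrite <- sqrt_1; apply sqrt_le_1_alt; lra]).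
assert (Hn : 0 < n) by (apply lt_0_INR; destruct S; [congruence | simpl; lia]).
assert (Hsq : lsum (map (fun s => s ^ 2) S) = n)
  by (apply (Rmult_eq_reg_r (/ n)); [rewrite Rinv_r by lra; exact Hpow | apply Rinv_neq_0_compat; lra]).
set (D := 2 * K ^ 3 * t * (t * K + m1)).
assert (HD : D <= 2 * K ^ 3 * (K + m1) * t).
{ unfold D. pose proof (pow_le K 3 HK0).
  assert (t * K <= K) by nra. assert (0 <= 2 * K ^ 3 * t) by nra. nra. }
assert (Hsum : lsum (map (fun s0 => s0 ^ 2 + - D) S) <= lsum (map (fun s0 => mse_amp S s0 t) S)).
{ apply lsum_map_le. intros s0 Hs0.
  pose proof (mse_amp_ge S K Hne HK Hnd Hsym s0 t m1 (HK s0 Hs0) (proj1 Ht) Hm1). unfold D; lra. }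
rewrite lsum_map_plus, lsum_map_const, Hsq in Hsum. fold n in Hsum.
rewrite mmse_mse_amp. fold t n.
apply Rle_div_r; [easy|]. nra.
Qed.

End Constellation.

(** * The rate gap *)

Section PhiInverse.

Variables (sigma2 delta : R).
Hypotheses (Hsigma2 : 0 < sigma2) (Hdelta : 0 < delta).

Lemma phi_inv_Rmin rho :
  phi_inv sigma2 delta rho = Rmin 1 (delta / Rmax rho (delta / (1 + sigma2)) - sigma2).
Proof.
unfold phi_inv.
set (r0 := delta / (1 + sigma2)).
assert (Hr0 : 0 < r0) by (apply Rdiv_lt_0_compat; lra).
assert (Hdr : delta / r0 - sigma2 = 1) by (unfold r0; field; lra).
destruct (Rlt_dec rho r0).
- rewrite Rmax_right, Hdr, Rmin_left by lra. easy.
- rewrite Rmax_left by lra.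
  assert (delta / rho <= delta / r0).
  { apply Rmult_le_compat_l; [lra|]. apply Rinv_le_contravar; lra. }
  rewrite Rmin_right by lra. easy.
Qed.

Lemma phi_inv_le_1 rho : phi_inv sigma2 delta rho <= 1.
Proof. rewrite phi_inv_Rmin. apply Rmin_l. Qed.

Lemma phi_inv_le0 rho : delta / sigma2 <= rho -> phi_inv sigma2 delta rho <= 0.
Proof.
intros Hrho. unfold phi_inv.
assert (delta / (1 + sigma2) < delta / sigma2)
  by (apply Rmult_lt_compat_l; [lra | apply Rinv_lt_contravar; nra]).
destruct (Rlt_dec rho (delta / (1 + sigma2))); [lra|].
assert (Hsig : 0 < delta / sigma2) by (apply Rdiv_lt_0_compat; lra).
assert (delta / rho <= delta / (delta / sigma2))
  by (apply Rmult_le_compat_l; [lra | apply Rinv_le_contravar; lra]).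
assert (delta / (delta / sigma2) = sigma2) by (field; lra).
lra.
Qed.

Lemma continuous_phi_inv rho : continuous (phi_inv sigma2 delta) rho.
Proof.
set (r0 := delta / (1 + sigma2)).
assert (Hr0 : 0 < r0) by (apply Rdiv_lt_0_compat; lra).
apply (continuous_ext (fun rho => Rmin 1 (delta / Rmax rho r0 - sigma2)));
  [intro; rewrite phi_inv_Rmin; reflexivity|].
apply (continuous_lipschitz2 Rmin (fun _ => 1)); [apply Rmin_lipschitz | apply continuous_const|].
apply (continuous_comp (fun rho => Rmax rho r0) (fun m => delta / m - sigma2)).
- apply (continuous_lipschitz2 Rmax (fun rho => rho) (fun _ => r0));
    [apply Rmax_lipschitz | apply continuous_id | apply continuous_const].
- apply (ex_derive_continuous (V := R_NormedModule)). auto_derive.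
  pose proof (Rmax_r rho r0). lra.
Qed.

End PhiInverse.

Lemma a_S_bounds sigma2 S delta C :
  0 < sigma2 -> 0 < delta -> constellation S -> 0 <= C ->
  (forall rho, 0 <= rho <= delta / sigma2 -> 1 - C * sqrt rho <= mmse S rho) ->
  0 <= a_S sigma2 S delta <= delta / sigma2 * (C * sqrt (delta / sigma2)).
Proof.
intros Hsigma2 Hdelta HS HC Hmmse.
set (B := delta / sigma2).
assert (HB : 0 < B) by (apply Rdiv_lt_0_compat; lra).
set (F := fun rho => phi_inv sigma2 delta rho - psi_opt sigma2 S delta rho).
assert (HF0 : forall rho, 0 <= F rho)
  by (intro rho; unfold F, psi_opt; pose proof (Rmin_l (phi_inv sigma2 delta rho) (mmse S rho)); lra).
assert (HFB : forall rho, 0 <= rho <= B -> F rho <= C * sqrt B).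
{ intros rho Hrho. unfold F, psi_opt.
  pose proof (phi_inv_le_1 sigma2 delta Hsigma2 Hdelta rho). pose proof (Hmmse rho Hrho).
  assert (C * sqrt rho <= C * sqrt B) by (apply Rmult_le_compat_l, sqrt_le_1_alt; lra).
  pose proof (sqrt_pos rho).
  unfold Rmin; destruct (Rle_dec (phi_inv sigma2 delta rho) (mmse S rho)); nra. }
assert (HFz : forall rho, B <= rho -> F rho = 0).
{ intros rho Hrho. unfold F, psi_opt.
  pose proof (phi_inv_le0 sigma2 delta Hsigma2 Hdelta rho Hrho). pose proof (mmse_ge0 S HS rho).
  rewrite Rmin_left by lra. ring. }
assert (Hex : forall a b, ex_RInt F a b).
{ intros. apply (ex_RInt_continuous (V := R_CompleteNormedModule)). intros.
  apply (continuous_minus (phi_inv sigma2 delta) (fun rho => psi_opt sigma2 S delta rho));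
    [apply continuous_phi_inv; easy|].
  apply (continuous_lipschitz2 Rmin); [apply Rmin_lipschitz | apply continuous_phi_inv; easy |].
  apply continuous_mmse, HS. }
unfold a_S. fold F. rewrite (integral_0_inf_eventually_zero F B) by (auto; lra).
split; [apply RInt_ge_0; auto; lra|].
replace (B * (C * sqrt B)) with (RInt (fun _ => C * sqrt B) 0 B)
  by (rewrite RInt_const; change ((B - 0) * (C * sqrt B) = B * (C * sqrt B)); ring).
apply RInt_le; [lra | easy | apply ex_RInt_const |].
intros x Hx. apply HFB. lra.
Qed.

Lemma Rabs_R_AC_sub_C_G_le sigma2 S delta C :
  0 < sigma2 -> 0 < delta -> constellation S -> 0 <= C ->
  (forall rho, 0 <= rho <= delta / sigma2 -> 1 - C * sqrt rho <= mmse S rho) ->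
  Rabs (R_AC sigma2 S delta - C_G sigma2) <= C * sqrt (delta / sigma2) / (2 * sigma2).
Proof.
intros Hsigma2 Hdelta HS HC Hmmse.
destruct (a_S_bounds sigma2 S delta C Hsigma2 Hdelta HS HC Hmmse) as [Ha0 Ha].
unfold R_AC.
replace (C_G sigma2 - a_S sigma2 S delta / (2 * delta) - C_G sigma2)
  with (- (a_S sigma2 S delta / (2 * delta))) by ring.
rewrite Rabs_Ropp, Rabs_pos_eq by (apply Rdiv_le_0_compat; lra).
apply Rle_div_l; [lra|].
replace (C * sqrt (delta / sigma2) / (2 * sigma2) * (2 * delta))
  with (delta / sigma2 * (C * sqrt (delta / sigma2))) by (field; lra).
easy.
Qed.

Theorem theorem2 (sigma2 : R) (S : list R) :
  0 < sigma2 -> constellation S ->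
  forall eps, 0 < eps -> exists eta, 0 < eta /\
    forall delta, 0 < delta < eta ->
      Rabs (R_AC sigma2 S delta - C_G sigma2) < eps.
Proof.
intros Hsigma2 HS eps Heps.
destruct (mmse_ge_one_sub_sqrt S HS) as [C [HC Hmmse]].
set (m := Rmin 1 (sigma2 * eps / (C + 1))).
assert (Hm : 0 < m) by (apply Rmin_pos; [lra | apply Rdiv_lt_0_compat; nra]).
assert (Hm1 : m <= 1) by apply Rmin_l.
assert (Hmeps : C * m < sigma2 * eps).
{ assert (C * m <= C * (sigma2 * eps / (C + 1))) by (apply Rmult_le_compat_l; [easy | apply Rmin_r]).
  assert (C * (sigma2 * eps / (C + 1)) = sigma2 * eps - sigma2 * eps / (C + 1)) by (field; lra).
  assert (0 < sigma2 * eps / (C + 1)) by (apply Rdiv_lt_0_compat; nra).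
  lra. }
exists (sigma2 * m ^ 2); split; [apply Rmult_lt_0_compat; [easy | apply pow_lt, Hm]|].
intros delta [Hdelta Heta].
assert (HB : 0 <= delta / sigma2 < m ^ 2) by (split; [apply Rdiv_le_0_compat | apply Rlt_div_l]; nra).
assert (HsB : sqrt (delta / sigma2) < m) by (rewrite <- (sqrt_pow2 m) by lra; apply sqrt_lt_1_alt, HB).
eapply Rle_lt_trans.
- apply (Rabs_R_AC_sub_C_G_le sigma2 S delta C Hsigma2 Hdelta HS HC).
  intros rho Hrho. apply Hmmse. nra.
- apply Rlt_div_l; [lra|].
  assert (C * sqrt (delta / sigma2) <= C * m) by (apply Rmult_le_compat_l; lra).
  assert (0 < sigma2 * eps) by (apply Rmult_lt_0_compat; easy). lra.
Qed.
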